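(* Let $U$ be a VLA-J-SS. Then $U$ satisfies the half Jacobi identity if and only if it satisfies the half associator formula: for all homogeneous $u,v,w\in U$ and all $k,n\in\mathbb{N}$, $$(u_kv)_nw=\sum_{i\ge0}(-1)^i\binom{k}{i}\big(u_{k-i}(v_{n+i}w)-\varepsilon_{u,v}(-1)^kv_{n+k-i}(u_iw)\big).$$
   Context: All spaces over $\mathbb{C}$; $\mathbb{N}=\{0,1,2,\dots\}$; $\varepsilon_{u,v}=(-1)^{|u||v|}$. A VLA-J-SS is a $\mathbb{Z}_2$-graded space $U$ with an even linear operator $D$ and bilinear products $u_nv$ ($n\in\mathbb{N}$) such that for homogeneous $u,v$: $u_nv=0$ for $n$ large; $(Du)_nv=-nu_{n-1}v$ (read as $0$ for $n=0$); $D(u_nv)=(Du)_nv+u_n(Dv)$; $|u_nv|=|u|+|v|$. The half Jacobi identity is: for all homogeneous $u,v,w\in U$ and all $k,m,n\in\mathbb{N}$, $\sum_{i\ge0}(-1)^i\binom{k}{i}(u_{m+k-i}(v_{n+i}w)-\varepsilon_{u,v}(-1)^kv_{n+k-i}(u_{m+i}w))=\sum_{i\ge0}\binom{m}{i}(u_{k+i}v)_{m+n-i}w$. *)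

From mathcomp Require Import all_boot all_algebra.
From mathcomp Require Import reals.
From mathcomp Require Export complex.
Set Implicit Arguments. Unset Strict Implicit. Unset Printing Implicit Defensive.
Import GRing.Theory.
Local Open Scope ring_scope.

Section VLA.
Variables (R : realType) (U : lmodType R[i]).

Definition subspace (P : U -> Prop) : Prop :=
  P 0 /\ forall (a : R[i]) x y, P x -> P y -> P (a *: x + y).

Definition Z2grading (P0 P1 : U -> Prop) : Prop :=
  [/\ subspace P0, subspace P1,
      (forall u, P0 u -> P1 u -> u = 0) &
      (forall u, exists u0 u1, [/\ P0 u0, P1 u1 & u = u0 + u1])].

(* u is homogeneous of parity p (false = even, true = odd) *)
Definition homog (P0 P1 : U -> Prop) (p : bool) (u : U) : Prop :=
  if p then P1 u else P0 u.

Definition eps (p q : bool) : R[i] := (-1) ^+ (p && q).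

(* (U, grading P0/P1, D, products mu n u v = u_n v) is a VLA-J-SS *)
Definition is_VLAJSS (P0 P1 : U -> Prop) (D : U -> U)
    (mu : nat -> U -> U -> U) : Prop :=
  Z2grading P0 P1 /\
  [/\
      (forall (a : R[i]) x y, D (a *: x + y) = a *: D x + D y),
      (forall p u, homog P0 P1 p u -> homog P0 P1 p (D u)),
      (forall n (a : R[i]) x y z, mu n (a *: x + y) z = a *: mu n x z + mu n y z),
      (forall n (a : R[i]) x y z, mu n z (a *: x + y) = a *: mu n z x + mu n z y) &
      (forall p q u v, homog P0 P1 p u -> homog P0 P1 q v ->
        [/\ (exists N, forall n, (N <= n)%N -> mu n u v = 0),
            (forall n, mu n (D u) v = - (n%:R *: mu n.-1 u v)),
            (forall n, D (mu n u v) = mu n (D u) v + mu n u (D v)) &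
            (forall n, homog P0 P1 (p (+) q) (mu n u v))])].

Definition half_jacobi (P0 P1 : U -> Prop) (mu : nat -> U -> U -> U) : Prop :=
  forall (p q r : bool) (u v w : U) (k m n : nat),
    homog P0 P1 p u -> homog P0 P1 q v -> homog P0 P1 r w ->
    \sum_(i < k.+1) (((-1) ^+ i * ('C(k, i))%:R) *:
        (mu (m + k - i)%N u (mu (n + i)%N v w)
         - (eps p q * (-1) ^+ k) *: mu (n + k - i)%N v (mu (m + i)%N u w)))
    = \sum_(i < m.+1) (('C(m, i))%:R *: mu (m + n - i)%N (mu (k + i)%N u v) w).

Definition half_associator (P0 P1 : U -> Prop) (mu : nat -> U -> U -> U) : Prop :=
  forall (p q r : bool) (u v w : U) (k n : nat),
    homog P0 P1 p u -> homog P0 P1 q v -> homog P0 P1 r w ->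
    mu n (mu k u v) w =
    \sum_(i < k.+1) (((-1) ^+ i * ('C(k, i))%:R) *:
        (mu (k - i)%N u (mu (n + i)%N v w)
         - (eps p q * (-1) ^+ k) *: mu (n + k - i)%N v (mu i u w))).

End VLA.

From mathcomp Require Import all_boot all_algebra.
From mathcomp Require Import reals complex.

(* Both sides are built from two families of binomial sums,
     A f k m n = \sum_i (-1)^i C(k,i) f (m+k-i) (n+i),
     B h m k n = \sum_i C(m,i) h (m+n-i) (k+i),
   obeying the Pascal rules A f k (m+1) n = A f (k+1) m n + A f k m (n+1) and
   B h (m+1) k n = B h m k (n+1) + B h m (k+1) n.  The half associator formula
   is the case m = 0 of the half Jacobi identity, and the Pascal rules carry it
   to every m by induction, the sign (-1)^k in front of the second A-term
   absorbing the shift k -> k+1.  The argument is purely combinatorial: none of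
   the VLA-J-SS axioms is needed. *)

Set Implicit Arguments. Unset Strict Implicit. Unset Printing Implicit Defensive.
Import GRing.Theory.
Local Open Scope ring_scope.

Section BinomialSums.
Variables (K : pzRingType) (V : lmodType K).
Implicit Types (f g h : nat -> nat -> V) (k m n : nat).

Definition alt_binom_sum f k m n :=
  \sum_(i < k.+1) (((-1) ^+ i * 'C(k, i)%:R) *: f (m + k - i)%N (n + i)%N).

Definition binom_sum h m k n :=
  \sum_(i < m.+1) ('C(m, i)%:R *: h (m + n - i)%N (k + i)%N).

Lemma alt_binom_sumS f k m n :
  alt_binom_sum f k.+1 m n = alt_binom_sum f k m.+1 n - alt_binom_sum f k m n.+1.
Proof.
rewrite /alt_binom_sum big_ord_recl.
under eq_bigr => i _ do rewrite lift0 binS natrD mulrDr scalerDl.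
rewrite big_split /= big_ord_recr /= (bin_small (ltnSn k)) mulr0n mulr0 scale0r addr0.
rewrite [in RHS]big_ord_recl -addrA -sumrN; congr (_ + (_ + _)).
- by rewrite !bin0 !subn0 addnS.
- by apply: eq_bigr => i _; rewrite lift0 /= addnS addSn subSS.
- apply: eq_bigr => i _.
  by rewrite exprS mulN1r mulNr scaleNr addnS subSS addnS addSn.
Qed.

Lemma alt_binom_sum_pascal f k m n :
  alt_binom_sum f k m.+1 n = alt_binom_sum f k.+1 m n + alt_binom_sum f k m n.+1.
Proof. by rewrite alt_binom_sumS subrK. Qed.

Lemma binom_sumS h m k n :
  binom_sum h m.+1 k n = binom_sum h m k n.+1 + binom_sum h m k.+1 n.
Proof.
rewrite /binom_sum big_ord_recl.
under eq_bigr => i _ do rewrite lift0 binS natrD scalerDl.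
rewrite big_split /= big_ord_recr /= (bin_small (ltnSn m)) scale0r addr0.
rewrite [in RHS]big_ord_recl -addrA; congr (_ + (_ + _)).
- by rewrite !bin0 !subn0 addnS.
- by apply: eq_bigr => i _; rewrite lift0 /= addnS addSn subSS addnS.
- by apply: eq_bigr => i _; rewrite addSn subSS addnS addSn.
Qed.

Lemma binom_sum0 h k n : binom_sum h 0 k n = h n k.
Proof. by rewrite /binom_sum big_ord1 scale1r subn0 addn0. Qed.

Lemma sum_alt_binomB f g (c : K) k m n :
  \sum_(i < k.+1) (((-1) ^+ i * 'C(k, i)%:R) *:
                     (f (m + k - i)%N (n + i)%N - c *: g (n + k - i)%N (m + i)%N))
  = alt_binom_sum f k m n - c *: alt_binom_sum g k n m.
Proof.
rewrite /alt_binom_sum scaler_sumr -sumrB; apply: eq_bigr => i _.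
rewrite scalerBr !scalerA; congr (_ - _ *: _).
by apply/esym/commrM; [exact: commr_sign | exact: commr_nat].
Qed.

Lemma alt_binom_sum_eq_binom_sum f g h (e : K) :
    (forall k n, h n k =
       alt_binom_sum f k 0 n - (e * (-1) ^+ k) *: alt_binom_sum g k n 0) ->
  forall m k n, binom_sum h m k n =
    alt_binom_sum f k m n - (e * (-1) ^+ k) *: alt_binom_sum g k n m.
Proof.
move=> base; elim=> [|m IHm] k n; first by rewrite binom_sum0 base.
rewrite binom_sumS !IHm exprS mulN1r mulrN scaleNr opprK.
rewrite (alt_binom_sum_pascal f k m) (alt_binom_sum_pascal g k n) scalerDr opprD.
rewrite [LHS]addrACA [X in _ + X = _]addrAC addNr add0r.
by rewrite [in LHS](addrC (alt_binom_sum f k _ _)).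
Qed.

End BinomialSums.

Theorem lemma6p2 (R : realType) (U : lmodType R[i]) (P0 P1 : U -> Prop)
    (D : U -> U) (mu : nat -> U -> U -> U) :
  is_VLAJSS P0 P1 D mu ->
  (half_jacobi P0 P1 mu <-> half_associator P0 P1 mu).
Proof.
move=> _; split=> [HJ p q r u v w k n hu hv hw | HA p q r u v w k m n hu hv hw].
- transitivity (binom_sum (fun a b => mu a (mu b u v) w) 0 k n).
    by rewrite binom_sum0.
  exact: esym (HJ p q r u v w k 0%N n hu hv hw).
- pose fA a b := mu a u (mu b v w); pose fB a b := mu a v (mu b u w).
  rewrite (sum_alt_binomB fA fB); symmetry.
  apply: (alt_binom_sum_eq_binom_sum (h := fun a b => mu a (mu b u v) w)) => {}k {}n.
  (* the m = 0 sums match the half associator up to conversion of 0 + k *)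
  exact: etrans (HA p q r u v w k n hu hv hw) (sum_alt_binomB fA fB _ _ 0 _).
Qed.
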